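(* Let $r\ge 3$, $s_r \ge \cdots \ge s_1 \ge 1$, and $m,n\ge 1$ be integers. Then $$Z(m,n,s_1,\ldots,s_r) \le \frac{(s_2+\cdots+s_r-r+1)^{1/s_1}}{r-1}\, m\, n^{\,r-1-\frac{1}{s_1\cdots s_{r-1}}} + (s_1-1)\binom{n}{r-1}.$$
   Context: An $r$-graph is a set of $r$-element subsets (edges) of a finite vertex set. An $m$ by $n$ semibipartite $r$-graph is an $r$-graph $\mathcal{H}$ with vertex set partitioned into $V_1,V_2$, $|V_1|=m$, $|V_2|=n$, such that every edge contains exactly one vertex of $V_1$. $K^r_{s_1,\ldots,s_r}$ is the complete $r$-partite $r$-graph with parts $W_1,\ldots,W_r$ of sizes $s_1,\ldots,s_r$ (edges: all $r$-sets with exactly one vertex in each part). An ordered copy of $K^r_{s_1,\ldots,s_r}$ in such $\mathcal{H}$ is a copy in which $W_1\subseteq V_1$ and $W_2,\ldots,W_r\subseteq V_2$. $Z(m,n,s_1,\ldots,s_r)$ is the maximum number of edges in an $m$ by $n$ semibipartite $r$-graph with no ordered copy of $K^r_{s_1,\ldots,s_r}$. *)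

From mathcomp Require Import all_boot.
From Stdlib Require Import Reals ClassicalEpsilon.
Set Implicit Arguments. Unset Strict Implicit. Unset Printing Implicit Defensive.

Definition vtx (m n : nat) : finType := ('I_m + 'I_n)%type.

Definition in_V1 m n (x : vtx m n) : bool := if x is inl _ then true else false.
Definition in_V2 m n (x : vtx m n) : bool := if x is inr _ then true else false.

Definition is_rgraph m n (r : nat) (H : {set {set vtx m n}}) : Prop :=
  forall e, e \in H -> #|e| = r.

Definition semibipartite m n (H : {set {set vtx m n}}) : Prop :=
  forall e, e \in H -> #|[set x in e | in_V1 x]| = 1.

(* Ordered copy of K^r_{s_1,...,s_r} (parts indexed 1..r; s i = s_i):
   pairwise disjoint parts W_1 ⊆ V_1, W_2..W_r ⊆ V_2, |W_i| = s_i, and every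
   r-set with exactly one vertex in each part is an edge of H. *)
Definition has_ordered_copy m n (r : nat) (s : nat -> nat)
    (H : {set {set vtx m n}}) : Prop :=
  exists W : nat -> {set vtx m n},
    [/\ forall i, 1 <= i <= r -> #|W i| = s i,
        W 1 \subset [set x | in_V1 x],
        forall i, 2 <= i <= r -> W i \subset [set x | in_V2 x],
        forall i j, 1 <= i <= r -> 1 <= j <= r -> i != j -> [disjoint W i & W j]
      & forall f : nat -> vtx m n, (forall i, 1 <= i <= r -> f i \in W i) ->
          [set f (val i).+1 | i : 'I_r] \in H].

Definition pb (P : Prop) : bool := if excluded_middle_informative P then true else false.

Definition Zfree m n r (s : nat -> nat) (H : {set {set vtx m n}}) : bool :=
  pb (is_rgraph r H /\ semibipartite H /\ ~ has_ordered_copy r s H).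

Definition Zmax (m n r : nat) (s : nat -> nat) : nat :=
  \max_(H : {set {set vtx m n}} | Zfree r s H) #|H|.

From mathcomp Require Import all_boot zify.

(* Induction on the uniformity, alternating between two bounds.  (A) A k-graph L on n
   vertices with no copy of K_{s_2,...,s_{k+1}} has
   k |L| <= (s_2 + ... + s_{k+1} - k) n^(k - 1/(s_2...s_k)).
   (B) Encode an m by n semibipartite (k+1)-graph as a set E of pairs (v, T) with |T| = k.
   If no s_1-set S of V_1 has a common link containing K_{s_2,...,s_{k+1}}, then
   (k (|E| - (s_1 - 1) C(n,k)))^s_1 <= (s_2 + ... + s_{k+1} - k) (m n^(k - 1/(s_1...s_k)))^s_1.
   (A) for k gives (B) for k: count the pairs (S, T) with S in the common neighbourhood of T;
   convexity of x |-> C(x, s_1) bounds their number from below by the left side of (B),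
   while (A) applied to each common link bounds it from above.  (B) for k gives (A) for
   k + 1: apply it to the n by n graph of pairs (x, e \ x) with x in e in L, in which an
   s_2-set whose common link contains K_{s_3,...,s_{k+2}} yields a copy of
   K_{s_2,...,s_{k+2}} in L.  The theorem is (B) for k = r - 1 after taking s_1-th roots. *)

Lemma ffact_leq_expn n m : n ^_ m <= n ^ m.
Proof.
rewrite ffact_prod -[in n ^ m](card_ord m) -prod_nat_const.
by apply: leq_prod => i _; apply: leq_subr.
Qed.

Lemma expn_subn_leq_ffact n m : (n - m) ^ m.+1 <= n ^_ m.+1.
Proof.
rewrite ffact_prod -[in _ ^ m.+1](card_ord m.+1) -prod_nat_const.
apply: leq_prod => i _; have := ltn_ord i; lia.
Qed.

Lemma fact_bin_leq_expn n m : m`! * 'C(n, m) <= n ^ m.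
Proof. by rewrite mulnC bin_ffact; apply: ffact_leq_expn. Qed.

Lemma muln_bin_leq_expn n m : m * 'C(n, m) <= n ^ m.
Proof. exact: leq_trans (leq_mul (fact_geq m) (leqnn _)) (fact_bin_leq_expn n m). Qed.

Lemma prodn_nat_gt0 (F : nat -> nat) a b :
  (forall i, a <= i < b -> 0 < F i) -> 0 < \prod_(a <= i < b) F i.
Proof. by move=> F_gt0; rewrite big_nat_cond; apply: prodn_cond_gt0 => i /andP [/F_gt0]. Qed.

Lemma sum_nat_shift_sub (F : nat -> nat) k :
  (forall i, 2 <= i <= k.+2 -> 0 < F i) ->
  \sum_(2 <= i < k.+3) F i - k.+1 = (\sum_(2 <= i < k.+2) F i.+1 - k) + (F 2 - 1).
Proof.
move=> F_gt0; have : \sum_(2 <= i < k.+2) 1 <= \sum_(2 <= i < k.+2) F i.+1.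
  by rewrite big_nat_cond [leqRHS]big_nat_cond; apply: leq_sum => i /andP [? _]; apply: F_gt0; lia.
have := F_gt0 2 isT; rewrite sum_nat_const_nat [\sum_(2 <= i < k.+3) F i]big_ltn //.
rewrite [\sum_(3 <= i < k.+3) F i]big_add1 /=; lia.
Qed.

Lemma double_count {I J : finType} (R : I -> J -> bool) :
  \sum_i #|[set j | R i j]| = \sum_j #|[set i | R i j]|.
Proof.
under eq_bigr do rewrite -sum1dep_card.
under [RHS]eq_bigr do rewrite -sum1dep_card.
exact: exchange_big_dep.
Qed.

Lemma card_pairs {I J : finType} (D : {set I * J}) :
  #|D| = \sum_j #|[set i | (i, j) \in D]|.
Proof.
rewrite -double_count.
under eq_bigr do rewrite -sum1dep_card.
rewrite pair_big_dep /= -sum1_card.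
by apply: eq_bigl => -[i j].
Qed.

Lemma chebyshev_expn {J : finType} (A : pred J) (y : J -> nat) e :
  (\sum_(j in A) y j ^ e) * (\sum_(j in A) y j) <= #|A| * \sum_(j in A) y j ^ e.+1.
Proof.
have rearrange i j : y i ^ e * y j + y j ^ e * y i <= y i ^ e.+1 + y j ^ e.+1.
  rewrite !expnSr; wlog le_ij : i j / y i <= y j.
    move=> W; case: (leqP (y i) (y j)) => [/W //| /ltnW /W]; lia.
  have : y i ^ e <= y j ^ e by case: (e) => [|e']; rewrite ?expn0 ?leq_exp2r.
  nia.
set P := \sum_(i in A) \sum_(j in A) y i ^ e * y j.
have -> : (\sum_(j in A) y j ^ e) * (\sum_(j in A) y j) = P.
  by rewrite big_distrl; apply: eq_bigr => i _; rewrite big_distrr.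
have sumP : \sum_(i in A) \sum_(j in A) (y i ^ e * y j + y j ^ e * y i) = P + P.
  rewrite [in RHS]/P [X in _ = _ + X]exchange_big -big_split.
  by apply: eq_bigr => i _; rewrite -big_split.
have sumQ : \sum_(i in A) \sum_(j in A) (y i ^ e.+1 + y j ^ e.+1) =
            2 * (#|A| * \sum_(j in A) y j ^ e.+1).
  under eq_bigr do rewrite big_split /= sum_nat_const.
  by rewrite big_split /= sum_nat_const -big_distrr mul2n -addnn.
have : P + P <= 2 * (#|A| * \sum_(j in A) y j ^ e.+1).
  by rewrite -sumP -sumQ; apply: leq_sum => i _; apply: leq_sum => j _.
lia.
Qed.

Lemma power_mean_sum {J : finType} (A : pred J) (y : J -> nat) s :
  (\sum_(j in A) y j) ^ s.+1 <= #|A| ^ s * \sum_(j in A) y j ^ s.+1.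
Proof.
elim: s => [|s IH]; first by rewrite expn0 mul1n expn1; under [leqRHS]eq_bigr do rewrite expn1.
rewrite expnSr (expnSr #|A|) -mulnA.
apply: leq_trans (leq_mul IH (leqnn _)) _.
by rewrite -mulnA leq_mul2l chebyshev_expn orbT.
Qed.

Lemma sum_bin_lower_bound {J : finType} (A : pred J) (d : J -> nat) s :
  (\sum_(j in A) d j - s * #|A|) ^ s.+1 <= #|A| ^ s * s.+1`! * \sum_(j in A) 'C(d j, s.+1).
Proof.
have shift : \sum_(j in A) d j - s * #|A| <= \sum_(j in A) (d j - s).
  have : \sum_(j in A) d j <= \sum_(j in A) (d j - s + s) by apply: leq_sum => j _; lia.
  rewrite big_split /= sum_nat_const; lia.
apply: leq_trans (_ : (\sum_(j in A) (d j - s)) ^ s.+1 <= _); first by rewrite leq_exp2r.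
apply: leq_trans (power_mean_sum _ _ _) _.
rewrite -mulnA leq_mul2l big_distrr /=; apply/orP; right.
by apply: leq_sum => j _; rewrite mulnC bin_ffact; apply: expn_subn_leq_ffact.
Qed.

Section CommonLinks.
Context {m n : nat}.

Definition nbhd (E : {set 'I_m * {set 'I_n}}) (T : {set 'I_n}) : {set 'I_m} :=
  [set v | (v, T) \in E].

Definition common_link (E : {set 'I_m * {set 'I_n}}) (S : {set 'I_m}) : {set {set 'I_n}} :=
  [set T | S \subset nbhd E T].

Lemma common_link_base_size {k} {E : {set 'I_m * {set 'I_n}}} (S : {set 'I_m}) :
  (forall p, p \in E -> #|p.2| = k) ->
  S != set0 -> forall T, T \in common_link E S -> #|T| = k.
Proof.
move=> sizeE /set0Pn [v vS] T; rewrite inE => /subsetP /(_ v vS).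
by rewrite inE => /sizeE.
Qed.

Lemma common_link_count s {k} {E : {set 'I_m * {set 'I_n}}} :
  (forall p, p \in E -> #|p.2| = k) ->
  (#|E| - s * 'C(n, k)) ^ s.+1 <=
    'C(n, k) ^ s * s.+1`! * \sum_(S : {set 'I_m} | #|S| == s.+1) #|common_link E S|.
Proof.
move=> sizeE; pose A := [set T : {set 'I_n} | #|T| == k].
have cardA : #|A| = 'C(n, k) by rewrite card_draws card_ord.
have nbhd0 T : T \notin A -> nbhd E T = set0.
  rewrite inE => kT; apply/setP => v; rewrite !inE.
  by apply: contraNF kT => /sizeE /= ->.
have cardE : #|E| = \sum_(T in A) #|nbhd E T|.
  rewrite card_pairs (bigID (mem A)) /= [X in _ + X]big1 ?addn0 //.
  by move=> T /nbhd0; rewrite /nbhd => ->; rewrite cards0.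
have choose_in_nbhd T : 'C(#|nbhd E T|, s.+1) =
    #|[set S : {set 'I_m} | (#|S| == s.+1) && (S \subset nbhd E T)]|.
  by rewrite -cards_draws; apply: eq_card => S; rewrite !inE andbC.
have double : \sum_(T in A) 'C(#|nbhd E T|, s.+1) =
              \sum_(S : {set 'I_m} | #|S| == s.+1) #|common_link E S|.
  transitivity (\sum_T #|[set S : {set 'I_m} | (#|S| == s.+1) && (S \subset nbhd E T)]|).
    rewrite [RHS](bigID (mem A)) /= [X in _ + X]big1 ?addn0 => [|T nT].
      by apply: eq_bigr => T _; apply: choose_in_nbhd.
    by rewrite -choose_in_nbhd nbhd0 // cards0 bin0n.
  rewrite double_count (bigID (fun S : {set 'I_m} => #|S| == s.+1)) /=.
  rewrite [X in _ + X]big1 ?addn0 => [|S /negbTE sS].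
    by apply: eq_bigr => S sS; apply: eq_card => T; rewrite !inE sS.
  by apply/eqP; rewrite cards_eq0; apply/eqP/setP => T; rewrite !inE sS.
by rewrite cardE -cardA -double; apply: sum_bin_lower_bound.
Qed.

Lemma weighted_common_link_count w s {k} {E : {set 'I_m * {set 'I_n}}} :
  (forall p, p \in E -> #|p.2| = k) ->
  (w * (#|E| - s * 'C(n, k))) ^ s.+1 <=
    (w * 'C(n, k)) ^ s * (s.+1`! * \sum_(S : {set 'I_m} | #|S| == s.+1) w * #|common_link E S|).
Proof.
move=> sizeE; rewrite -big_distrr /= !expnMn expnS.
apply: leq_trans (leq_mul (leqnn (w * w ^ s)) (common_link_count s sizeE)) _.
by rewrite [_ * (w * _)]mulnCA !mulnA [w * w ^ s]mulnC [w ^ s * w * _]mulnAC.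
Qed.

End CommonLinks.

Lemma imset_ord_recl {T : finType} (g : nat -> T) k :
  [set g (val i) | i : 'I_k.+1] = g 0 |: [set g (val i).+1 | i : 'I_k].
Proof.
apply/setP => x; rewrite !inE; apply/imsetP/orP.
  case=> -[[|j] lt_jk] _ -> /=; first by left.
  by right; apply/imsetP; exists (Ordinal (lt_jk : j < k)).
case=> [/eqP -> | /imsetP [i _ ->]]; first by exists ord0.
by exists (lift ord0 i).
Qed.

(* Parts are indexed 2, ..., k+1, so that part i has size s i as in K_{s_1,...,s_r}. *)
Definition has_partite_copy {n} k (s : nat -> nat) (L : {set {set 'I_n}}) : Prop :=
  exists U : nat -> {set 'I_n},
    [/\ forall i, 2 <= i <= k.+1 -> #|U i| = s i,
        forall i j, 2 <= i <= k.+1 -> 2 <= j <= k.+1 -> i != j -> [disjoint U i & U j]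
      & forall f : nat -> 'I_n, (forall i, 2 <= i <= k.+1 -> f i \in U i) ->
          [set f (val i).+2 | i : 'I_k] \in L].

Lemma card_singletons_no_copy {n} s (L : {set {set 'I_n}}) :
  (forall T, T \in L -> #|T| = 1) -> ~ has_partite_copy 1 s L -> #|L| <= s 2 - 1.
Proof.
move=> sizeL no_copy; rewrite leqNgt; apply/negP => big_L; apply: no_copy.
pose A := [set x | [set x] \in L].
have cardA : #|A| = #|L|.
  have eL : L = [set [set x] | x in A].
    apply/setP => T; apply/idP/imsetP => [TL | [x xA ->]]; last by rewrite inE in xA.
    have /cards1P [x eT] : #|T| == 1 by rewrite sizeL.
    by exists x; rewrite // inE -eT.
  by rewrite [in RHS]eL card_imset //; apply: set1_inj.
have : 0 < #|[set U : {set 'I_n} | U \subset A & #|U| == s 2]|.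
  by rewrite cards_draws bin_gt0; lia.
rewrite card_gt0 => /set0Pn [U]; rewrite inE => /andP [sUA /eqP cardU].
exists (fun=> U); split=> [i | i j | f].
- by rewrite -eqn_leq => /eqP <-.
- by rewrite -!eqn_leq => /eqP <- /eqP <-; rewrite eqxx.
move=> /(_ 2 (leqnn 2)) fU.
have -> : [set f (val i).+2 | i : 'I_1] = [set f 2].
  apply/setP => x; rewrite inE; apply/imsetP/eqP => [[i _ ->] | ->].
    by rewrite (ord1 i).
  by exists ord0.
by have := subsetP sUA _ fU; rewrite inE.
Qed.

Section PointedEdges.
Context {n : nat}.
Implicit Types (L : {set {set 'I_n}}) (S : {set 'I_n}).

Definition pointed_edges L : {set 'I_n * {set 'I_n}} :=
  [set p : 'I_n * {set 'I_n} | (p.1 \notin p.2) && (p.1 |: p.2 \in L)].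

Lemma card_pointed_edge_base {k L} : (forall T, T \in L -> #|T| = k.+1) ->
  forall p, p \in pointed_edges L -> #|p.2| = k.
Proof.
move=> sizeL [x T]; rewrite inE /= => /andP [xT /sizeL].
by rewrite cardsU1 xT => -[].
Qed.

Lemma card_pointed_edges {k L} : (forall T, T \in L -> #|T| = k.+1) ->
  #|pointed_edges L| = k.+1 * #|L|.
Proof.
move=> sizeL.
pose F := [set p : 'I_n * {set 'I_n} | (p.1 \in p.2) && (p.2 \in L)].
pose add_point (p : 'I_n * {set 'I_n}) := (p.1, p.1 |: p.2).
have inj_add : {in pointed_edges L &, injective add_point}.
  move=> [x T] [y T']; rewrite !inE /= => /andP [xT _] /andP [yT _] [exy eT].
  by subst y; congr (_, _); rewrite -(setU1K xT) eT setU1K.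
have im_add : add_point @: pointed_edges L = F.
  apply/setP => -[x T]; rewrite inE /=; apply/imsetP/andP.
    by case=> -[y T']; rewrite inE /= => /andP [_ yL] [-> ->]; rewrite setU11.
  case=> xT TL; exists (x, T :\ x); last by rewrite /add_point /= setD1K.
  by rewrite inE /= setD11 setD1K.
rewrite -(card_in_imset inj_add) im_add card_pairs.
rewrite (eq_bigr (fun T => if T \in L then k.+1 else 0)) => [|T _].
  by rewrite -big_mkcond /= sum_nat_const mulnC.
case: ifP => TL.
  by rewrite -(sizeL _ TL); apply: eq_card => x; rewrite !inE TL andbT.
by apply/eqP; rewrite cards_eq0; apply/eqP/setP => x; rewrite !inE TL andbF.
Qed.

Lemma common_link_pointed_disjoint {k L S} {U : nat -> {set 'I_n}} :
  (forall i, 2 <= i <= k.+1 -> U i != set0) ->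
  (forall f : nat -> 'I_n, (forall i, 2 <= i <= k.+1 -> f i \in U i) ->
     [set f (val i).+2 | i : 'I_k] \in common_link (pointed_edges L) S) ->
  forall j, 2 <= j <= k.+1 -> [disjoint S & U j].
Proof.
move=> U_gt0 transversal j j_range; apply/pred0P => x /=; apply/negbTE/andP => -[xS xU].
pose f i := if i == j then x else odflt x [pick y in U i].
have fU i : 2 <= i <= k.+1 -> f i \in U i.
  rewrite /f; case: eqP => [-> // | _] /U_gt0 /set0Pn [y yU].
  by case: pickP => [z -> // | none]; have := none y; rewrite /= yU.
have := transversal f fU; rewrite inE => /subsetP /(_ x xS).
rewrite !inE /= => /andP [/negP x_out _]; apply: x_out.
have lt_j2k : j - 2 < k by lia.
apply/imsetP; exists (Ordinal lt_j2k) => //=.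
by rewrite /f (_ : (j - 2).+2 = j) ?eqxx //; lia.
Qed.

Lemma pointed_edges_no_copy {k s L} S :
  (forall i, 2 <= i <= k.+2 -> 0 < s i) -> ~ has_partite_copy k.+1 s L ->
  #|S| = s 2 -> ~ has_partite_copy k (fun i => s i.+1) (common_link (pointed_edges L) S).
Proof.
move=> s_gt0 no_copy cardS [U [cardU disjU transversal]]; apply: no_copy.
have U_gt0 i : 2 <= i <= k.+1 -> U i != set0.
  by move=> i_range; rewrite -card_gt0 cardU // s_gt0 //; lia.
have disjSU := common_link_pointed_disjoint U_gt0 transversal.
exists (fun i => if i == 2 then S else U i.-1).
split=> [i i_range | i j i_range j_range ne_ij | f fW].
- case: eqP => [-> // | ne2]; rewrite cardU; first by congr s; lia.
  lia.
- case: eqP => [i2 | ne2i]; case: eqP => [j2 | ne2j].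
  + by rewrite i2 j2 in ne_ij.
  + by apply: disjSU; lia.
  + by rewrite disjoint_sym; apply: disjSU; lia.
  + by apply: disjU; lia.
have f2 : f 2 \in S by apply: (fW 2); lia.
have fU i : 2 <= i <= k.+1 -> f i.+1 \in U i.
  by move=> i_range; have := fW i.+1; rewrite (_ : i.+1 == 2 = false); [apply; lia | lia].
have := transversal _ fU; rewrite inE => /subsetP /(_ _ f2); rewrite !inE /= => /andP [_].
by rewrite (imset_ord_recl (fun j => f j.+2)).
Qed.

End PointedEdges.

Section PairsOfGraph.
Context {m n : nat}.
Implicit Types (p : 'I_m * {set 'I_n}) (H : {set {set vtx m n}}).

Definition edge_of_pair p : {set vtx m n} := inl p.1 |: inr @: p.2.

Lemma edge_of_pair_inr p x : (inr x \in edge_of_pair p) = (x \in p.2).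
Proof. by rewrite !inE (mem_imset _ _ inr_inj). Qed.

Lemma edge_of_pair_inl p v : (inl v \in edge_of_pair p) = (v == p.1).
Proof.
rewrite !inE; apply/orP/eqP => [[/eqP [] | /imsetP [x _]] // | ->].
by left.
Qed.

Lemma card_edge_of_pair p : #|edge_of_pair p| = #|p.2|.+1.
Proof.
rewrite cardsU1 card_imset; last exact: inr_inj.
by have /negPf -> : inl p.1 \notin inr @: p.2 by apply/imsetP => -[].
Qed.

Lemma edge_of_pair_inj : injective edge_of_pair.
Proof.
move=> [v T] [w T'] eq_e.
have : inl v \in edge_of_pair (w, T') by rewrite -eq_e edge_of_pair_inl.
rewrite edge_of_pair_inl => /eqP /= <-.
by congr (_, _); apply/setP => x; rewrite -(edge_of_pair_inr (v, T)) eq_e edge_of_pair_inr.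
Qed.

Definition pairs_of_graph H : {set 'I_m * {set 'I_n}} := [set p | edge_of_pair p \in H].

Lemma card_pairs_of_graph {H} : semibipartite H -> #|pairs_of_graph H| = #|H|.
Proof.
move=> semibip; rewrite -(card_imset _ edge_of_pair_inj).
suff -> : edge_of_pair @: pairs_of_graph H = H by [].
apply/setP => e; apply/imsetP/idP => [[p] | eH]; first by rewrite inE => ? ->.
have /cards1P [x0 e_V1] := introT eqP (semibip e eH).
have : x0 \in [set x in e | in_V1 x] by rewrite e_V1 set11.
rewrite inE; case: x0 e_V1 => [v e_V1 _ | y _ /andP [_ //]].
have e_pair : e = edge_of_pair (v, [set y | inr y \in e]).
  apply/setP => -[w | y]; last by rewrite edge_of_pair_inr inE.
  rewrite edge_of_pair_inl; have /setP /(_ (inl w)) := e_V1; rewrite !inE andbT => ->.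
  by apply/eqP/eqP => [[] | ->].
by exists (v, [set y | inr y \in e]); rewrite // inE -e_pair.
Qed.

Lemma pairs_of_graph_base_size {k H} : is_rgraph k.+1 H ->
  forall p, p \in pairs_of_graph H -> #|p.2| = k.
Proof. by move=> rgraph p; rewrite inE => /rgraph; rewrite card_edge_of_pair => -[]. Qed.

Lemma pairs_of_graph_no_copy {k s H} (S : {set 'I_m}) :
  0 < n -> ~ has_ordered_copy k.+1 s H ->
  #|S| = s 1 -> ~ has_partite_copy k s (common_link (pairs_of_graph H) S).
Proof.
move=> n_gt0 no_copy cardS [U [cardU disjU transversal]]; apply: no_copy.
pose W i := if i == 1 then inl @: S else inr @: U i.
have W_V2 i : 2 <= i <= k.+1 -> W i = inr @: U i by rewrite /W; case: eqP => [->|].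
exists W; split=> [i i_range | | i /W_V2 -> | i j i_range j_range ne_ij | f fW].
- rewrite /W; case: eqP => [-> | ne1]; first by rewrite card_imset //; apply: inl_inj.
  by rewrite card_imset; [apply: cardU; lia | apply: inr_inj].
- by apply/subsetP => _ /imsetP [v _ ->]; rewrite inE.
- by apply/subsetP => _ /imsetP [y _ ->]; rewrite inE.
- apply/pred0P => x /=; apply/negbTE/andP; rewrite /W.
  case: eqP => [i1 | ne1i]; case: eqP => [j1 | ne1j].
  + by rewrite i1 j1 in ne_ij.
  + by case=> /imsetP [v _ ->] /imsetP [].
  + by case=> /imsetP [y _ ->] /imsetP [].
  + case=> /imsetP [y yU ->] /imsetP [z zU [eq_yz]].
    by move: zU; rewrite -eq_yz (disjointFr (disjU i j _ _ ne_ij) yU) //; lia.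
have [v vS f1] : exists2 v, v \in S & f 1 = inl v.
  by have /imsetP [v vS ->] := fW 1 isT; exists v.
pose g i := if f i is inr y then y else Ordinal n_gt0.
have f_inr i : 2 <= i <= k.+1 -> f i = inr (g i) /\ g i \in U i.
  move=> i_range; have /imsetP [y yU fy] : f i \in inr @: U i by rewrite -W_V2 ?fW //; lia.
  by rewrite /g fy.
have := transversal g (fun i i_range => (f_inr i i_range).2).
rewrite inE => /subsetP /(_ v vS); rewrite !inE.
suff -> : [set f (val i).+1 | i : 'I_k.+1] = edge_of_pair (v, [set g (val i).+2 | i : 'I_k]).
  by [].
rewrite (imset_ord_recl (fun j => f j.+1)) /edge_of_pair /= f1 -imset_comp.
congr (_ |: _); apply: eq_imset => i /=.
by have [-> _] := f_inr i.+2 (ltn_ord i).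
Qed.

End PairsOfGraph.

(* Reals is imported only now: it rebinds [_ ^ _] in nat_scope to [Nat.pow]. *)
From Stdlib Require Import Reals Lra ClassicalEpsilon.

Section RealBounds.
Local Open Scope R_scope.

Lemma INR_muln (a b : nat) : INR (a * b)%nat = INR a * INR b.
Proof. exact: mult_INR. Qed.

Lemma INR_addn (a b : nat) : INR (a + b)%nat = INR a + INR b.
Proof. exact: plus_INR. Qed.

Lemma INR_expn (a e : nat) : INR (expn a e) = INR a ^ e.
Proof. by elim: e => [|e IH]; rewrite ?expn0 // expnS INR_muln IH. Qed.

Lemma INR_leq {a b : nat} : (a <= b)%nat -> INR a <= INR b.
Proof. by move/leP; apply: le_INR. Qed.

Lemma INR_sum_le_card_mul {I : finType} {P : pred I} {F : I -> nat} {c} :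
  (forall i, P i -> INR (F i) <= c) ->
  INR (\sum_(i | P i) F i) <= INR #|[set i | P i]| * c.
Proof.
move=> le_Fc; rewrite -sum1dep_card.
elim/big_rec2: _ => [|i x y Pi le_xy]; first by rewrite /= Rmult_0_l; lra.
by rewrite !INR_addn Rmult_plus_distr_r /= Rmult_1_l; have := le_Fc i Pi; lra.
Qed.

Lemma INR_bigmax_le {I : finType} {P : pred I} {F : I -> nat} {c} :
  0 <= c -> (forall i, P i -> INR (F i) <= c) -> INR (\max_(i | P i) F i) <= c.
Proof.
move=> c_ge0 le_Fc; elim/big_ind: _ => // x y le_xc le_yc.
by rewrite /maxn; case: ifP.
Qed.

Lemma pow_lt_pow s x y : 0 <= x < y -> x ^ s.+1 < y ^ s.+1.
Proof.
move=> [x_ge0 lt_xy]; elim: s => [|s IH]; first by rewrite /=; lra.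
have : 0 <= x ^ s.+1 by apply: pow_le.
rewrite /= in IH *; nra.
Qed.

Lemma pow_le_pow_inv s x y : 0 <= y -> x ^ s.+1 <= y ^ s.+1 -> x <= y.
Proof.
move=> y_ge0 le_pow; apply: Rnot_lt_le => lt_yx.
by have := pow_lt_pow s _ _ (conj y_ge0 lt_yx); lra.
Qed.

Lemma root_le_nat_mul {a : nat} {x y s} : 0 <= y ->
  x ^ s.+1 <= INR a * y ^ s.+1 -> x <= INR a * y.
Proof.
move=> y_ge0 le_pow; apply: (pow_le_pow_inv s); first by have := pos_INR a; nra.
apply: Rle_trans le_pow _; rewrite Rpow_mult_distr.
apply: Rmult_le_compat_r; first exact: pow_le.
case: a => [|a]; first by rewrite /= Rmult_0_l; lra.
rewrite -[X in X <= _]pow_1; apply: Rle_pow; last lia.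
by rewrite S_INR; have := pos_INR a; lra.
Qed.

Lemma root_le_Rpower_mul {a x y s} : 0 <= a -> 0 <= y ->
  x ^ s.+1 <= a * y ^ s.+1 -> x <= Rpower a (1 / INR s.+1) * y.
Proof.
move=> a_ge0 y_ge0 le_pow; have root_gt0 : 0 < Rpower a (1 / INR s.+1) by apply: exp_pos.
apply: (pow_le_pow_inv s); first by nra.
apply: Rle_trans le_pow _; rewrite Rpow_mult_distr.
apply: Rmult_le_compat_r; first exact: pow_le.
case: (Req_dec a 0) => [-> | a_neq0]; first by apply: pow_le; left; apply: exp_pos.
rewrite -Rpower_pow // Rpower_mult.
have -> : 1 / INR s.+1 * INR s.+1 = 1 by field; apply: not_0_INR.
by rewrite Rpower_1; lra.
Qed.

Lemma Rpower_exponent_split k s {x q} : 0 < x -> 0 < q ->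
  (x ^ k) ^ s * Rpower x (INR k - 1 / q) = Rpower x (INR k - 1 / (INR s.+1 * q)) ^ s.+1.
Proof.
move=> x_gt0 q_gt0; rewrite -[RHS]Rpower_pow; last exact: exp_pos.
rewrite -[x ^ k]Rpower_pow // -Rpower_pow; last exact: exp_pos.
rewrite !Rpower_mult -Rpower_plus; congr Rpower.
have := pos_INR s; rewrite S_INR => ?; field; lra.
Qed.

Lemma Rpower_mul_succ k x q : 0 < x ->
  x * Rpower x (INR k - q) = Rpower x (INR k.+1 - q).
Proof.
move=> x_gt0; rewrite -{1}(Rpower_1 x) // -Rpower_plus S_INR.
by congr Rpower; ring.
Qed.

Lemma pow_le_Rpower_succ k {x q} : 1 <= x -> 1 <= q ->
  x ^ k <= Rpower x (INR k.+1 - 1 / q).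
Proof.
move=> x_ge1 q_ge1; rewrite -Rpower_pow; last lra.
apply: Rle_Rpower => //; rewrite S_INR.
suff : 1 / q <= 1 by lra.
by rewrite -[1 in X in _ <= X]Rinv_1 /Rdiv Rmult_1_l; apply: Rinv_le_contravar; lra.
Qed.

Lemma INR_prodn_gt0 {F : nat -> nat} {a b} :
  (forall i, (a <= i < b)%nat -> (0 < F i)%nat) -> 0 < INR (\prod_(a <= i < b) F i).
Proof. by move=> F_gt0; apply/lt_0_INR/ltP/prodn_nat_gt0. Qed.

Definition partite_turan_bound k : Prop :=
  forall n s (L : {set {set 'I_n}}),
  (0 < n)%nat -> (forall i, 2 <= i <= k.+1 -> 0 < s i)%nat ->
  (forall T, T \in L -> #|T| = k) -> ~ has_partite_copy k s L ->
  INR (k * #|L|) <= INR (\sum_(2 <= i < k.+2) s i - k) *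
                    Rpower (INR n) (INR k - 1 / INR (\prod_(2 <= i < k.+1) s i)).

(* Stated without an s_1-th root: as [Rpower 0 y = 1], the root form would lose the
   information that E is small when s_2 = ... = s_{k+1} = 1. *)
Definition semibipartite_turan_bound k : Prop :=
  forall m n s (E : {set 'I_m * {set 'I_n}}),
  (0 < n)%nat -> (forall i, 1 <= i <= k.+1 -> 0 < s i)%nat ->
  (forall p, p \in E -> #|p.2| = k) ->
  (forall S : {set 'I_m}, #|S| = s 1%nat -> ~ has_partite_copy k s (common_link E S)) ->
  (INR k * INR (#|E| - (s 1%nat - 1) * 'C(n, k))) ^ s 1%nat <=
    INR (\sum_(2 <= i < k.+2) s i - k) *
    (INR m * Rpower (INR n) (INR k - 1 / INR (\prod_(1 <= i < k.+1) s i))) ^ s 1%nat.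

Lemma partite_turan_bound1 : partite_turan_bound 1.
Proof.
move=> n s L n_gt0 _ sizeL no_copy; rewrite big_nat1 big_geq // mul1n.
have -> : INR 1 - 1 / INR 1 = 0 by rewrite /=; field.
rewrite Rpower_O ?Rmult_1_r; last by apply/lt_0_INR/ltP.
exact/INR_leq/card_singletons_no_copy.
Qed.

Lemma sum_common_links_bound {k s' m n s} {E : {set 'I_m * {set 'I_n}}} :
  partite_turan_bound k -> (0 < n)%nat -> (forall i, 2 <= i <= k.+1 -> 0 < s i)%nat ->
  (forall p, p \in E -> #|p.2| = k) ->
  (forall S : {set 'I_m}, #|S| = s'.+1 -> ~ has_partite_copy k s (common_link E S)) ->
  INR (s'.+1`! * \sum_(S : {set 'I_m} | #|S| == s'.+1) k * #|common_link E S|) <=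
    INR m ^ s'.+1 * (INR (\sum_(2 <= i < k.+2) s i - k) *
                     Rpower (INR n) (INR k - 1 / INR (\prod_(2 <= i < k.+1) s i))).
Proof.
move=> partite n_gt0 s_gt0 sizeE no_copy; set c := INR _ * Rpower _ _.
have link_bound (S : {set 'I_m}) : #|S| == s'.+1 -> INR (k * #|common_link E S|) <= c.
  move=> /eqP cardS; apply: partite => //; last exact: no_copy.
  by apply: common_link_base_size; rewrite // -card_gt0 cardS.
have := INR_sum_le_card_mul link_bound; rewrite card_draws card_ord => sum_bound.
rewrite INR_muln; apply: (Rle_trans _ _ _ (Rmult_le_compat_l _ _ _ (pos_INR _) sum_bound)).
rewrite -Rmult_assoc -INR_muln -INR_expn; apply: Rmult_le_compat_r.
  by apply: Rmult_le_pos; [apply: pos_INR | left; apply: exp_pos].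
exact/INR_leq/fact_bin_leq_expn.
Qed.

Lemma semibipartite_of_partite k : (0 < k)%nat ->
  partite_turan_bound k -> semibipartite_turan_bound k.
Proof.
move=> k_gt0 partite m n s E n_gt0 s_gt0 sizeE no_copy.
have [s' s1_eq] : exists s', s 1%nat = s'.+1.
  by case: (s 1%nat) (s_gt0 1%nat isT) => // s' _; exists s'.
rewrite [\prod_(1 <= i < k.+1) s i]big_ltn //= s1_eq subSS subn0 INR_muln in no_copy *.
have Q_pos : 0 < INR (\prod_(2 <= i < k.+1) s i).
  by apply: INR_prodn_gt0 => i ?; apply: s_gt0; lia.
have n_pos : 0 < INR n by apply/lt_0_INR/ltP.
rewrite [in X in _ <= X]Rpow_mult_distr -(Rpower_exponent_split k s' n_pos Q_pos).
set Sg := INR (\sum_(2 <= i < k.+2) s i - k); set R1 := Rpower (INR n) _.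
rewrite -INR_muln -INR_expn.
apply: (Rle_trans _ _ _ (INR_leq (weighted_common_link_count k s' sizeE))).
rewrite INR_muln INR_expn (_ : Sg * _ = (INR n ^ k) ^ s' * (INR m ^ s'.+1 * (Sg * R1))).
  apply: Rmult_le_compat; [apply/pow_le/pos_INR | apply: pos_INR | |].
    apply: pow_incr; split; first exact: pos_INR.
    by rewrite -INR_expn; apply/INR_leq/muln_bin_leq_expn.
  by apply: sum_common_links_bound => // i ?; apply: s_gt0; lia.
by ring.
Qed.

Lemma partite_of_semibipartite k : (0 < k)%nat ->
  semibipartite_turan_bound k -> partite_turan_bound k.+1.
Proof.
move=> k_gt0 semibip n s L n_gt0 s_gt0 sizeL no_copy.
have shifted_gt0 i : (1 <= i <= k.+1)%nat -> (0 < s i.+1)%nat by move=> ?; apply: s_gt0; lia.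
have := semibip n n (fun i => s i.+1) (pointed_edges L) n_gt0 shifted_gt0
  (card_pointed_edge_base sizeL) (fun S => pointed_edges_no_copy S s_gt0 no_copy).
have [s' s2_eq] : exists s', s 2%nat = s'.+1.
  by case: (s 2%nat) (s_gt0 2%nat isT) => // s' _; exists s'.
have -> : (\prod_(1 <= i < k.+1) s i.+1 = \prod_(2 <= i < k.+2) s i)%nat by rewrite [RHS]big_add1.
have Q_ge1 : 1 <= INR (\prod_(2 <= i < k.+2) s i).
  by apply/(le_INR 1)/leP/prodn_nat_gt0 => i ?; apply: s_gt0; lia.
have n_ge1 : 1 <= INR n by apply/(le_INR 1)/leP.
rewrite (card_pointed_edges sizeL) s2_eq subSS subn0 Rpower_mul_succ; last lra.
set R := Rpower (INR n) _; set X := (k.+1 * #|L| - s' * 'C(n, k))%nat.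
have R_pos : 0 < R by apply: exp_pos.
move/(root_le_nat_mul (Rlt_le _ _ R_pos)) => kX_bound.
have C_bound : INR 'C(n, k) <= R.
  apply: (Rle_trans _ _ _ _ (pow_le_Rpower_succ k n_ge1 Q_ge1)).
  rewrite -INR_expn; apply: INR_leq.
  exact: leq_trans (leq_pmull _ k_gt0) (muln_bin_leq_expn n k).
have L_split : (k.+1 * #|L| <= X + s' * 'C(n, k))%nat by rewrite /X; lia.
have k_ge1 : 1 <= INR k by apply/(le_INR 1)/leP.
rewrite sum_nat_shift_sub // s2_eq subSS subn0 INR_addn.
apply: (Rle_trans _ _ _ (INR_leq L_split)); rewrite INR_addn INR_muln.
have := pos_INR X; have := pos_INR s'; nra.
Qed.

Lemma semibipartite_turan_bound_holds k : (0 < k)%nat -> semibipartite_turan_bound k.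
Proof.
elim: k => // k IH _; apply: semibipartite_of_partite => //.
case: k IH => [_ | k IH]; first exact: partite_turan_bound1.
by apply: partite_of_semibipartite => //; apply: IH.
Qed.

Lemma card_semibipartite_no_copy k m n s (H : {set {set vtx m n}}) :
  (0 < k)%nat -> (0 < n)%nat -> (forall i, 1 <= i <= k.+1 -> 0 < s i)%nat ->
  is_rgraph k.+1 H -> semibipartite H -> ~ has_ordered_copy k.+1 s H ->
  INR #|H| <=
    Rpower (INR (\sum_(2 <= i < k.+2) s i - k)) (1 / INR (s 1%nat)) / INR k * INR m
      * Rpower (INR n) (INR k - 1 / INR (\prod_(1 <= i < k.+1) s i))
    + INR (s 1%nat - 1) * INR 'C(n, k).
Proof.
move=> k_gt0 n_gt0 s_gt0 rgraph semibip no_copy.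
have := semibipartite_turan_bound_holds k k_gt0 m n s (pairs_of_graph H) n_gt0 s_gt0
  (pairs_of_graph_base_size rgraph) (fun S => pairs_of_graph_no_copy S n_gt0 no_copy).
have [s' ->] : exists s', s 1%nat = s'.+1.
  by case: (s 1%nat) (s_gt0 1%nat isT) => // s' _; exists s'.
rewrite (card_pairs_of_graph semibip) subSS subn0.
set R := Rpower (INR n) _; set a := Rpower _ (1 / _).
have mR_ge0 : 0 <= INR m * R by apply: Rmult_le_pos; [apply: pos_INR | left; apply: exp_pos].
move/(root_le_Rpower_mul (pos_INR _) mR_ge0); rewrite -/a => root_bound.
have H_split : (#|H| <= (#|H| - s' * 'C(n, k)) + s' * 'C(n, k))%nat by lia.
apply: (Rle_trans _ _ _ (INR_leq H_split)); rewrite INR_addn INR_muln.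
apply: Rplus_le_compat_r; have k_pos : 0 < INR k by apply/lt_0_INR/ltP.
apply: (Rmult_le_reg_l (INR k)) => //.
by have -> : INR k * (a / INR k * INR m * R) = a * (INR m * R) by field; lra.
Qed.

End RealBounds.

Theorem proposition2p11 (r m n : nat) (s : nat -> nat) :
  3 <= r -> 1 <= s 1 -> (forall i, 1 <= i < r -> s i <= s i.+1) ->
  1 <= m -> 1 <= n ->
  (INR (Zmax m n r s) <=
     Rpower (INR (\sum_(2 <= i < r.+1) s i + 1 - r)%nat) (1 / INR (s 1%nat))
       / INR (r - 1)%nat * INR m
       * Rpower (INR n) (INR (r - 1)%nat - 1 / INR (\prod_(1 <= i < r) s i)%nat)
     + INR (s 1%nat - 1)%nat * INR 'C(n, (r - 1)%nat))%R.
Proof.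
case: r => [//|k] r3 s1_gt0 s_mono _ n_gt0.
have s_gt0 i : 1 <= i <= k.+1 -> 0 < s i.
  elim: i => [//|[_ _ //|i] IH] i_range.
  by apply: leq_trans (IH _) (s_mono _ _); lia.
rewrite subSS subn0 addn1 subSS; apply: INR_bigmax_le => [|H].
  have k_pos : (0 < INR k)%R by apply/lt_0_INR/ltP; lia.
  apply: Rplus_le_le_0_compat; apply: Rmult_le_pos; try apply: pos_INR.
    apply: Rmult_le_pos; last exact: pos_INR.
    by left; apply: Rdiv_lt_0_compat => //; apply: exp_pos.
  by left; apply: exp_pos.
rewrite /Zfree /pb; case: excluded_middle_informative => // -[rgraph [semibip no_copy]] _.
by apply: card_semibipartite_no_copy => //; lia.
Qed.
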